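(* Let $\mathcal A_+,\mathcal A_-\subseteq\mathbb R^n$ be disjoint finite sets such that $\mathcal A=\mathcal A_+\cup\mathcal A_-$ is full dimensional and $\mathcal A_-\subseteq\operatorname{int}(\operatorname{conv}(\mathcal A_+))$. Then every SONC signomial $f\in\mathcal S(\mathcal A_+,\mathcal A_-)$ satisfies $\#\operatorname{Sing}_{>0}(f)\le1$.
   Context: For disjoint finite $\mathcal A_+,\mathcal A_-\subseteq\mathbb R^n$, a signomial with signed support $(\mathcal A_+,\mathcal A_-)$ is $f:\mathbb R^n_{>0}\to\mathbb R$, $f(x)=\sum_{a\in\mathcal A_+}c_ax^a-\sum_{b\in\mathcal A_-}c_bx^b$ with all $c_a,c_b>0$; $\mathcal S(\mathcal A_+,\mathcal A_-)$ is the set of these. Full dimensional means $\dim\operatorname{conv}(\mathcal A)=n$. $\operatorname{Sing}_{>0}(f)$ is the set of $x\in\mathbb R^n_{>0}$ with $f(x)=x_1\partial_{x_1}f(x)=\dots=x_n\partial_{x_n}f(x)=0$. A signed support $(\mathcal B_+,\mathcal B_-)$ with $\mathcal B=\mathcal B_+\cup\mathcal B_-$ is an extended circuit if either $\#\mathcal B=\#\mathcal B_+=1$ or $\operatorname{conv}(\mathcal B)$ is a simplex whose vertex set is $\mathcal B_+$; it is a circuit if either $\#\mathcal B=\#\mathcal B_+=1$ or it is an extended circuit with $\#\mathcal B_-=1$ and $\mathcal B_-\subseteq\operatorname{relint}(\operatorname{conv}(\mathcal B_+))$. A circuit signomial is a signomial whose signed support is a circuit. A signomial on $\mathbb R^n_{>0}$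 is SONC if it is a finite sum of circuit signomials each of which is nonnegative on $\mathbb R^n_{>0}$. *)

From HB Require Import structures.
From mathcomp Require Import all_boot all_order all_algebra.
From mathcomp Require Import finmap.
From mathcomp Require Import all_classical all_reals all_analysis.
Set Implicit Arguments. Unset Strict Implicit. Unset Printing Implicit Defensive.
Import Order.TTheory GRing.Theory Num.Theory.
Import numFieldNormedType.Exports.
Local Open Scope classical_set_scope.
Local Open Scope fset_scope.
Local Open Scope ring_scope.

Section Signomials.
Variables (R : realType) (n : nat).
Notation V := 'rV[R]_n.

Definition posorthant (x : V) : Prop := forall i : 'I_n, 0 < x ord0 i.

Definition monom (a x : V) : R := \prod_(i < n) (x ord0 i) `^ (a ord0 i).

Definition signomial (Ap Am : {fset V}) (c : V -> R) (x : V) : R :=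
  \sum_(a <- Ap) c a * monom a x - \sum_(b <- Am) c b * monom b x.

(* f : R^n_{>0} -> R lies in S(Ap, Am) (values outside the orthant are irrelevant) *)
Definition in_S (Ap Am : {fset V}) (f : V -> R) : Prop :=
  [disjoint Ap & Am] /\
  exists c : V -> R, (forall a, a \in Ap `|` Am -> 0 < c a) /\
    forall x, posorthant x -> f x = signomial Ap Am c x.

Definition convhull (B : {fset V}) : set V :=
  [set x | exists l : V -> R, (forall b, b \in B -> 0 <= l b) /\
     \sum_(b <- B) l b = 1 /\ x = \sum_(b <- B) l b *: b].

Definition aff (B : {fset V}) : set V :=
  [set x | exists l : V -> R, \sum_(b <- B) l b = 1 /\ x = \sum_(b <- B) l b *: b].

(* dim conv(B) = n, i.e. the affine hull of B is all of R^n *)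
Definition full_dimensional (B : {fset V}) : Prop := aff B = setT.

Definition affinely_independent (B : {fset V}) : Prop :=
  forall l : V -> R, \sum_(b <- B) l b = 0 -> \sum_(b <- B) l b *: b = 0 ->
    forall b, b \in B -> l b = 0.

Definition relint_aff (B : {fset V}) (C : set V) : set V :=
  [set x | C x /\ exists2 e : R, 0 < e & forall y, aff B y -> `|y - x| < e -> C y].

Definition relint_conv (B : {fset V}) : set V := relint_aff B (convhull B).

Definition simplex_with_vertices (B Bp : {fset V}) : Prop :=
  affinely_independent Bp /\ convhull B = convhull Bp.

Definition extended_circuit (Bp Bm : {fset V}) : Prop :=
  [disjoint Bp & Bm] /\
  ((#|` Bp `|` Bm| = 1 /\ #|` Bp| = 1)%N \/ simplex_with_vertices (Bp `|` Bm) Bp).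

Definition circuit (Bp Bm : {fset V}) : Prop :=
  [disjoint Bp & Bm] /\
  ((#|` Bp `|` Bm| = 1 /\ #|` Bp| = 1)%N \/
   (extended_circuit Bp Bm /\ #|` Bm| = 1%N /\
    forall b, b \in Bm -> relint_conv Bp b)).

Definition nonneg_circuit_signomial (Bp Bm : {fset V}) (c : V -> R) : Prop :=
  circuit Bp Bm /\ (forall a, a \in Bp `|` Bm -> 0 < c a) /\
  forall x, posorthant x -> 0 <= signomial Bp Bm c x.

Definition SONC (f : V -> R) : Prop :=
  exists s : seq ({fset V} * {fset V} * (V -> R)),
    (forall t, t \in s -> nonneg_circuit_signomial t.1.1 t.1.2 t.2) /\
    forall x, posorthant x -> f x = \sum_(t <- s) signomial t.1.1 t.1.2 t.2 x.

Definition Sing_pos (f : V -> R) : set V :=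
  [set x | posorthant x /\ f x = 0 /\
     forall i : 'I_n, x ord0 i * 'D_(delta_mx ord0 i) f x = 0].

End Signomials.

From HB Require Import structures.
From mathcomp Require Import all_boot all_order all_algebra.
From mathcomp Require Import finmap.
From mathcomp Require Import all_classical all_reals all_analysis.
From mathcomp Require Import ring lra.
Set Implicit Arguments. Unset Strict Implicit. Unset Printing Implicit Defensive.
Import Order.TTheory GRing.Theory Num.Theory.
Import numFieldNormedType.Exports.
Local Open Scope classical_set_scope.
Local Open Scope fset_scope.
Local Open Scope ring_scope.

(* Write x = exp u and y = exp (u + v) coordinatewise; only f x = f y = 0 is used.
   On the curve t |-> exp (u + t v) every term of a SONC decomposition of f vanishes
   at t = 0 and t = 1. For a circuit term with negative exponent b, dividing by
   c_b exp <b, u + t v> leaves a convex sum of exponentials minus a constant; it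
   vanishes at both ends and is nonnegative at the midpoint, so all its slopes
   <a - b, v> vanish and the term is zero on the whole curve, hence so is f.
   If v <> 0, take a0 in A+ maximizing <a, v>; as A- lies in the interior of
   conv A+, <b, v> < <a0, v> for every b in A-, so for large t the monomial at a0
   dominates all negative terms and f > 0 on the curve, a contradiction. *)

Section ExponentialSums.
Variables (R : realType) (I : eqType).
Implicit Types (s : seq I) (c al be : I -> R).

Definition expsum s c al be (t : R) : R :=
  \sum_(i <- s) c i * expR (al i + t * be i).

Lemma expsum_midpoint_defect s c al be :
  expsum s c al be 0 + expsum s c al be 1 - 2 * expsum s c al be (1 / 2) =
  \sum_(i <- s) c i * expR (al i) * (1 - expR (be i / 2)) ^+ 2.
Proof.
rewrite /expsum mulr_sumr -sumrN -!big_split /=; apply: eq_bigr => i _.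
have -> : expR (al i + 1 * be i) = expR (al i) * expR (be i / 2) ^+ 2.
  by rewrite expr2 -!expRD; congr expR; field.
have -> : expR (al i + 1 / 2 * be i) = expR (al i) * expR (be i / 2).
  by rewrite -expRD; congr expR; field.
by rewrite mul0r addr0; ring.
Qed.

Lemma expsum_slopes_eq0 s c al be (d : R) : {in s, forall i, 0 < c i} ->
  expsum s c al be 0 = d -> expsum s c al be 1 = d ->
  d <= expsum s c al be (1 / 2) -> {in s, forall i, be i = 0}.
Proof.
move=> c_gt0 at0 at1 at_half.
pose F i := c i * expR (al i) * (1 - expR (be i / 2)) ^+ 2.
have F_ge0 i : i \in s -> 0 <= F i.
  by move=> /c_gt0 ci; rewrite mulr_ge0 ?sqr_ge0 // mulr_ge0 ?expR_ge0 // ltW.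
have sumF_le0 : \sum_(i <- s | i \in s) F i <= 0.
  by rewrite -big_seq -expsum_midpoint_defect at0 at1; lra.
move=> i si; move: sumF_le0; rewrite le_eqVlt ltNge sumr_ge0 ?orbF => [|j /F_ge0 //].
rewrite psumr_eq0 => [/allP/(_ i si)|j /F_ge0 //].
rewrite si /= /F mulf_eq0 mulf_eq0 gt_eqF ?c_gt0 //= expR_eq0 /= sqrf_eq0.
by rewrite subr_eq0 -{1}expR0 => /eqP/expR_inj; lra.
Qed.

Lemma expsum_shift s c al be (b : I) t :
  expsum s c al be t = expR (al b + t * be b) *
    expsum s c (fun i => al i - al b) (fun i => be i - be b) t.
Proof.
rewrite /expsum mulr_sumr; apply: eq_bigr => i _.
by rewrite mulrCA -expRD; congr (_ * expR _); ring.
Qed.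

Lemma expsum_eq_exp s c al be (b : I) : {in s, forall i, 0 < c i} ->
  expsum s c al be 0 = c b * expR (al b + 0 * be b) ->
  expsum s c al be 1 = c b * expR (al b + 1 * be b) ->
  c b * expR (al b + 1 / 2 * be b) <= expsum s c al be (1 / 2) ->
  forall t, expsum s c al be t = c b * expR (al b + t * be b).
Proof.
move=> c_gt0 at0 at1 at_half t.
set al' := fun i => al i - al b; set be' := fun i => be i - be b.
have shift_eq t' : expsum s c al be t' = c b * expR (al b + t' * be b) ->
    expsum s c al' be' t' = c b.
  by rewrite (expsum_shift _ _ _ _ b) mulrC => /(mulIf (lt0r_neq0 (expR_gt0 _))).
have /shift_eq at0' := at0; have /shift_eq at1' := at1.
rewrite (expsum_shift _ _ _ _ b) [expR _ * _]mulrC ler_pM2r ?expR_gt0 // in at_half.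
have be'0 := expsum_slopes_eq0 c_gt0 at0' at1' at_half.
rewrite (expsum_shift _ _ _ _ b) mulrC -[in RHS]at0' /expsum; congr (_ * _).
by apply: eq_big_seq => i /be'0; rewrite /al' /be' => ->; rewrite !mulr0.
Qed.

Lemma expsum_dominates (P M : seq I) c al be (a0 : I) :
  uniq P -> a0 \in P -> {in P ++ M, forall i, 0 <= c i} -> 0 < c a0 ->
  {in M, forall b, be b < be a0} ->
  exists t, expsum M c al be t < expsum P c al be t.
Proof.
move=> uP a0P c_ge0 ca0 be_lt.
pose p i := c i * expR (al i).
have p_ge0 i : i \in P ++ M -> 0 <= p i.
  by move=> /c_ge0 ci; rewrite mulr_ge0 ?expR_ge0.
have pa0 : 0 < p a0 by rewrite mulr_gt0 ?expR_gt0.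
pose d := \big[Order.min/1]_(b <- M | b \in M) (be a0 - be b).
have d_gt0 : 0 < d by apply: lt_bigmin => // b /be_lt; rewrite subr_gt0.
have d_le b : b \in M -> d <= be a0 - be b by move=> bM; exact: ge_bigmin_seq.
pose K := \sum_(b <- M) p b.
have K_ge0 : 0 <= K.
  by rewrite /K big_seq sumr_ge0 // => b bM; rewrite p_ge0 // mem_cat bM orbT.
pose t := K / (p a0 * d).
have t_ge0 : 0 <= t by rewrite divr_ge0 // mulr_ge0 // ltW.
exists t; rewrite /expsum.
have pE i : c i * expR (al i + t * be i) = p i * expR (t * be i).
  by rewrite /p expRD mulrA.
under eq_bigr do rewrite pE; under [X in _ < X]eq_bigr do rewrite pE.
have M_le : \sum_(b <- M) p b * expR (t * be b) <= K * expR (t * (be a0 - d)).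
  rewrite /K mulr_suml big_seq [X in _ <= X]big_seq; apply: ler_sum => b bM.
  rewrite ler_wpM2l ?p_ge0 ?mem_cat ?bM ?orbT // ler_expR ler_wpM2l //.
  by rewrite lerBrDr -lerBrDl d_le.
have P_ge : p a0 * expR (t * be a0) <= \sum_(a <- P) p a * expR (t * be a).
  rewrite (bigD1_seq a0) //= lerDl big_seq_cond sumr_ge0 // => a /andP[aP _].
  by rewrite mulr_ge0 ?expR_ge0 ?p_ge0 ?mem_cat ?aP.
apply: le_lt_trans M_le _; apply: lt_le_trans P_ge.
rewrite [t * be a0](_ : _ = t * (be a0 - d) + t * d) ?expRD; last by ring.
rewrite mulrCA [X in _ < X]mulrC ltr_pM2r ?expR_gt0 //.
(* t is chosen so that p a0 * t * d = K, and exp (t d) >= 1 + t d. *)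
apply: lt_le_trans (_ : K < p a0 * (1 + t * d)) _; last first.
  by rewrite ler_wpM2l ?expR_ge1Dx // ltW.
rewrite mulrDr mulr1 [X in _ + X](_ : _ = K) ?ltrDr //.
by rewrite /t; field; rewrite !gt_eqF.
Qed.

End ExponentialSums.

Lemma fset_argmax (K : choiceType) d (T : orderType d) (A : {fset K}) (F : K -> T) :
  A != fset0 -> exists2 a0, a0 \in A & {in A, forall a, (F a <= F a0)%O}.
Proof.
case: (fset_0Vmem A) => [-> /eqP //|[e eA] _].
case: (@arg_maxP _ _ _ [` eA] xpredT (fun a : A => F (val a)) isT) => a0 _ a0_max.
by exists (val a0) => [|a aA]; [exact: fsvalP | exact: a0_max [` aA] isT].
Qed.

Section LogarithmicCoordinates.
Variables (R : realType) (n : nat).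
Notation V := 'rV[R]_n.
Implicit Types (a b u v x : V).

Definition dotv a u : R := \sum_(i < n) a ord0 i * u ord0 i.

Definition expv u : V := \row_i expR (u ord0 i).

Definition lnv x : V := \row_i ln (x ord0 i).

Lemma dotvDl a b u : dotv (a + b) u = dotv a u + dotv b u.
Proof. by rewrite /dotv -big_split; apply: eq_bigr => i _; rewrite mxE mulrDl. Qed.

Lemma dotvZl k a u : dotv (k *: a) u = k * dotv a u.
Proof. by rewrite /dotv mulr_sumr; apply: eq_bigr => i _; rewrite mxE mulrA. Qed.

Lemma dotv_suml (s : seq V) (l : V -> R) u :
  dotv (\sum_(b <- s) l b *: b) u = \sum_(b <- s) l b * dotv b u.
Proof.
elim: s => [|b s IH]; rewrite ?big_nil ?big_cons; last by rewrite dotvDl dotvZl IH.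
by rewrite /dotv big1 // => i _; rewrite mxE mul0r.
Qed.

Lemma dotv_line a u v t : dotv a (u + t *: v) = dotv a u + t * dotv a v.
Proof.
rewrite /dotv mulr_sumr -big_split; apply: eq_bigr => i _.
by rewrite !mxE mulrDr mulrCA.
Qed.

Lemma dotvv_gt0 v : v != 0 -> 0 < dotv v v.
Proof.
move=> v_neq0; have vv_ge0 i : true -> 0 <= v ord0 i * v ord0 i.
  by rewrite -expr2 sqr_ge0.
rewrite lt_def sumr_ge0 // andbT; apply: contra v_neq0.
rewrite psumr_eq0 // => /allP vi0; apply/eqP/rowP => i.
by have /implyP/(_ isT) := vi0 i (mem_index_enum i); rewrite mulf_eq0 orbb mxE => /eqP.
Qed.

Lemma posorthant_expv u : posorthant (expv u).
Proof. by move=> i; rewrite mxE expR_gt0. Qed.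

Lemma lnvK x : posorthant x -> expv (lnv x) = x.
Proof. by move=> x_gt0; apply/rowP => i; rewrite !mxE lnK // posrE. Qed.

Lemma monom_expv a u : monom a (expv u) = expR (dotv a u).
Proof.
rewrite /monom /dotv expR_sum; apply: eq_bigr => i _.
by rewrite /powR mxE gt_eqF ?expR_gt0 // expRK mulrC.
Qed.

Lemma signomial_expv_line Ap Am c u v t :
  signomial Ap Am c (expv (u + t *: v)) =
  expsum Ap c (dotv^~ u) (dotv^~ v) t - expsum Am c (dotv^~ u) (dotv^~ v) t.
Proof.
by rewrite /signomial /expsum; congr (_ - _); apply: eq_bigr => a _;
  rewrite monom_expv dotv_line.
Qed.

End LogarithmicCoordinates.
Arguments dotv {R n}.

Section SONCZeros.
Variables (R : realType) (n : nat).
Notation V := 'rV[R]_n.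
Implicit Types (u v : V) (c : V -> R).

Lemma monomial_signomial_gt0 (a : V) c x : 0 < c a -> posorthant x ->
  0 < signomial [fset a] fset0 c x.
Proof.
move=> ca x_gt0; rewrite /signomial big_seq_fset1 big_seq_fset0 subr0.
by rewrite mulr_gt0 // -(lnvK x_gt0) monom_expv expR_gt0.
Qed.

Lemma circuit_signomial_zero_on_line (Bp : {fset V}) (b : V) c u v :
  {in Bp, forall a, 0 < c a} ->
  (forall x, posorthant x -> 0 <= signomial Bp [fset b] c x) ->
  signomial Bp [fset b] c (expv u) = 0 ->
  signomial Bp [fset b] c (expv (u + v)) = 0 ->
  forall t, signomial Bp [fset b] c (expv (u + t *: v)) = 0.
Proof.
move=> c_gt0 f_ge0.
have fE t : signomial Bp [fset b] c (expv (u + t *: v)) =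
    expsum Bp c (dotv^~ u) (dotv^~ v) t - c b * expR (dotv b u + t * dotv b v).
  by rewrite signomial_expv_line /expsum big_seq_fset1.
have := fE 0; have := fE 1; rewrite scale0r addr0 scale1r => -> ->.
move=> /eqP; rewrite subr_eq0 => /eqP f0 /eqP; rewrite subr_eq0 => /eqP f1 t.
apply/eqP; rewrite fE subr_eq0; apply/eqP; apply: (expsum_eq_exp c_gt0 f0 f1).
by have := f_ge0 _ (posorthant_expv (u + (1 / 2) *: v)); rewrite fE subr_ge0.
Qed.

Lemma nonneg_circuit_signomial_zero_on_line (Bp Bm : {fset V}) c u v :
  nonneg_circuit_signomial Bp Bm c ->
  signomial Bp Bm c (expv u) = 0 -> signomial Bp Bm c (expv (u + v)) = 0 ->
  forall t, signomial Bp Bm c (expv (u + t *: v)) = 0.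
Proof.
move=> [[disj [[card1 cardp1]|[_ [cardm1 _]]]] [c_gt0 f_ge0]].
  have Bm0 : Bm = fset0.
    apply: cardfs0_eq; move: (cardfsUI Bp Bm).
    by rewrite card1 cardp1 disjoint_fsetI0 // cardfs0 => /addnI.
  have [a Bpa] : exists a, Bp = [fset a] by apply/cardfs1P/eqP.
  have ca : 0 < c a by apply: c_gt0; rewrite Bpa !inE eqxx.
  subst Bp Bm => f0; exfalso.
  by have := monomial_signomial_gt0 ca (posorthant_expv u); rewrite f0 ltxx.
have [b Bmb] : exists b, Bm = [fset b] by apply/cardfs1P/eqP.
subst Bm; apply: circuit_signomial_zero_on_line => // a aBp.
by apply: c_gt0; rewrite inE aBp.
Qed.

Lemma SONC_zero_on_line (f : V -> R) u v : SONC f ->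
  f (expv u) = 0 -> f (expv (u + v)) = 0 -> forall t, f (expv (u + t *: v)) = 0.
Proof.
move=> [s [s_circ fE]].
have terms0 w : f (expv w) = 0 ->
    forall g, g \in s -> signomial g.1.1 g.1.2 g.2 (expv w) = 0.
  rewrite fE; last exact: posorthant_expv.
  move=> /eqP; rewrite big_seq psumr_eq0 => [/allP g0 g gs|g gs].
    exact/eqP/(implyP (g0 g gs)).
  by have [_ [_ g_ge0]] := s_circ g gs; exact: g_ge0 (posorthant_expv w).
move=> /terms0 f0 /terms0 f1 t; rewrite fE; last exact: posorthant_expv.
rewrite big_seq; apply: big1 => g gs.
exact: nonneg_circuit_signomial_zero_on_line (s_circ g gs) (f0 g gs) (f1 g gs) t.
Qed.

End SONCZeros.

Section ConvexHulls.
Variables (R : realType) (n : nat).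
Notation V := 'rV[R]_n.
Implicit Types (A : {fset V}) (b v x : V).

Lemma convhull_fset0 x : ~ convhull (fset0 : {fset V}) x.
Proof. by move=> [l [_ []]]; rewrite big_seq_fset0 => /eqP; rewrite eq_sym oner_eq0. Qed.

Lemma full_dimensional_neq0 A : full_dimensional A -> A != fset0.
Proof.
move=> A_full; apply/eqP => A0; have : aff A 0 by rewrite A_full.
by rewrite A0 => -[l []]; rewrite big_seq_fset0 => /eqP; rewrite eq_sym oner_eq0.
Qed.

Lemma convhull_dotv_le A x v m : convhull A x ->
  {in A, forall a, dotv a v <= m} -> dotv x v <= m.
Proof.
move=> [l [l_ge0 [l1 ->]]] a_le; rewrite dotv_suml -[m]mul1r -l1 mulr_suml.
rewrite big_seq [X in _ <= X]big_seq; apply: ler_sum => a aA.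
by rewrite ler_wpM2l ?l_ge0 ?a_le.
Qed.

Lemma interior_convhull_dotv_lt A b v m : (convhull A)° b -> v != 0 ->
  {in A, forall a, dotv a v <= m} -> dotv b v < m.
Proof.
move=> /nbhs_ballP[e e_gt0 ball_sub] v_neq0 a_le.
pose d := e / (`|v| + 1).
have v1_gt0 : 0 < `|v| + 1 by rewrite ltr_wpDl.
have d_gt0 : 0 < d by rewrite divr_gt0.
have : dotv (b + d *: v) v <= m.
  apply: convhull_dotv_le a_le; apply: ball_sub.
  rewrite -ball_normE /ball_ /= opprD addrA subrr add0r normrN normrZ gtr0_norm //.
  by rewrite /d mulrAC ltr_pdivrMr // ltr_pM2l // ltrDl.
by rewrite dotvDl dotvZl; apply: lt_le_trans; rewrite ltrDl mulr_gt0 ?dotvv_gt0.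
Qed.

Lemma positive_support_neq0 (Ap Am : {fset V}) : full_dimensional (Ap `|` Am) ->
  (forall b, b \in Am -> (convhull Ap)° b) -> Ap != fset0.
Proof.
move=> full int; apply/eqP => Ap0; have Am0 : Am = fset0.
  apply/fsetP => b; rewrite inE; apply/negbTE/negP => /int/nbhs_singleton.
  by rewrite Ap0 => /convhull_fset0.
by move/full_dimensional_neq0: full; rewrite Ap0 Am0 fsetU0 eqxx.
Qed.

End ConvexHulls.

Lemma signomial_line_gt0 (R : realType) (n : nat) (Ap Am : {fset 'rV[R]_n})
    (c : 'rV[R]_n -> R) (u v : 'rV[R]_n) :
  Ap != fset0 -> (forall b, b \in Am -> (convhull Ap)° b) ->
  (forall a, a \in Ap `|` Am -> 0 < c a) -> v != 0 ->
  exists t, 0 < signomial Ap Am c (expv (u + t *: v)).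
Proof.
move=> Ap_neq0 Am_int c_gt0 v_neq0.
have [a0 a0Ap a0_max] := fset_argmax (dotv^~ v) Ap_neq0.
have Am_lt : {in Am, forall b, dotv b v < dotv a0 v}.
  by move=> b /Am_int b_int; exact: interior_convhull_dotv_lt b_int v_neq0 a0_max.
have c_ge0 : {in Ap ++ Am, forall a, 0 <= c a}.
  by move=> a; rewrite mem_cat => aApAm; rewrite ltW ?c_gt0 ?inE.
have ca0 : 0 < c a0 by apply: c_gt0; rewrite inE a0Ap.
have [t lt_t] := expsum_dominates (dotv^~ u) (fset_uniq Ap) a0Ap c_ge0 ca0 Am_lt.
by exists t; rewrite signomial_expv_line subr_gt0.
Qed.

Theorem proposition3p6 (R : realType) (n : nat) (Ap Am : {fset 'rV[R]_n})
    (f : 'rV[R]_n -> R) :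
  [disjoint Ap & Am] ->
  full_dimensional (Ap `|` Am) ->
  (forall b, b \in Am -> (convhull Ap)° b) ->
  in_S Ap Am f -> SONC f ->
  forall x y, Sing_pos f x -> Sing_pos f y -> x = y.
Proof.
move=> _ full Am_int [_ [c [c_gt0 fE]]] f_SONC x y [x_gt0 [fx0 _]] [y_gt0 [fy0 _]].
pose u := lnv x; pose v := lnv y - lnv x.
have xE : x = expv u by rewrite lnvK.
have yE : y = expv (u + v) by rewrite addrC subrK lnvK.
rewrite xE in fx0; rewrite yE in fy0.
have f0 := SONC_zero_on_line f_SONC fx0 fy0.
have [v0|v_neq0] := eqVneq v 0; first by rewrite xE yE v0 addr0.
have [t] := signomial_line_gt0 u (positive_support_neq0 full Am_int) Am_int c_gt0 v_neq0.
rewrite -fE; last exact: posorthant_expv.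
by rewrite f0 ltxx.
Qed.
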